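(* Let $\alpha\in(0,1)$ be irrational with continued fraction expansion $\alpha=[a_1,a_2,a_3,\dots]$ such that the sequence $(a_n)$ is bounded. Then for every $\lambda\in\mathbb{R}\setminus\{0\}$, every $\theta\in[0,1)$ and every $E\in\mathbb{C}$ the limit $$\gamma_\theta(E)=\lim_{n\to\infty}\frac{1}{n}\ln\|M(\lambda,E,v^n_{\alpha,\theta})\|$$ exists and is independent of $\theta$.
   Context: $\alpha=[a_1,a_2,\dots]$ means $\alpha=1/(a_1+1/(a_2+1/(a_3+\cdots)))$ with positive integers $a_n$. For $\theta\in[0,1)$ let $v_{\alpha,\theta}(n)=\chi_{[1-\alpha,1)}(n\alpha+\theta \bmod 1)$, $n\in\mathbb{Z}$, and let $v^n_{\alpha,\theta}$ denote the word $v_{\alpha,\theta}(1)\dots v_{\alpha,\theta}(n)$ over $\{0,1\}$. For $a\in\mathbb{R}$, $E\in\mathbb{C}$ let $T(\lambda,E,a)=\begin{pmatrix}E-\lambda a&-1\\1&0\end{pmatrix}$, and for a finite word $w=w_1\dots w_n$ over $\{0,1\}$ let $M(\lambda,E,w)=T(\lambda,E,w_n)\cdots T(\lambda,E,w_1)$. $\|\cdot\|$ is the operator norm on $2\times2$ complex matrices with respect to the Euclidean norm on $\mathbb{C}^2$. *)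

From Stdlib Require Import Reals.
From Coquelicot Require Import Coquelicot.
Open Scope R_scope.

(* finite continued fraction [a 0, ..., a (n-1)] = 1/(a0 + 1/(a1 + ... + 1/a(n-1))) ;
   a 0 plays the role of a_1 in the paper *)
Fixpoint cf_finite (a : nat -> nat) (n : nat) : R :=
  match n with
  | O => 0
  | S m => / (INR (a O) + cf_finite (fun k => a (S k)) m)
  end.

Definition is_cf_expansion (alpha : R) (a : nat -> nat) : Prop :=
  (forall k, (0 < a k)%nat) /\ is_lim_seq (cf_finite a) alpha.

Definition irrational (x : R) : Prop :=
  ~ exists p q : Z, q <> 0%Z /\ x = IZR p / IZR q.

Definition fracR (x : R) : R := x - IZR (Int_part x).

Definition v_seq (alpha theta : R) (n : nat) : R :=
  let y := fracR (INR n * alpha + theta) in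
  if Rle_dec (1 - alpha) y then (if Rlt_dec y 1 then 1 else 0) else 0.

Record mat2 := Mat2 { m11 : C; m12 : C; m21 : C; m22 : C }.

Definition mat2_mul (A B : mat2) : mat2 :=
  Mat2 (Cplus (Cmult (m11 A) (m11 B)) (Cmult (m12 A) (m21 B)))
       (Cplus (Cmult (m11 A) (m12 B)) (Cmult (m12 A) (m22 B)))
       (Cplus (Cmult (m21 A) (m11 B)) (Cmult (m22 A) (m21 B)))
       (Cplus (Cmult (m21 A) (m12 B)) (Cmult (m22 A) (m22 B))).

Definition mat2_id : mat2 := Mat2 (RtoC 1) (RtoC 0) (RtoC 0) (RtoC 1).

Definition mat2_apply (A : mat2) (v : C * C) : C * C :=
  (Cplus (Cmult (m11 A) (fst v)) (Cmult (m12 A) (snd v)),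
   Cplus (Cmult (m21 A) (fst v)) (Cmult (m22 A) (snd v))).

Definition vnorm (v : C * C) : R :=
  sqrt (Cmod (fst v) ^ 2 + Cmod (snd v) ^ 2).

Definition opnorm (A : mat2) : R :=
  real (Lub_Rbar (fun r => exists v, vnorm v = 1 /\ r = vnorm (mat2_apply A v))).

Definition Tmat (lambda : R) (E : C) (a : R) : mat2 :=
  Mat2 (Cminus E (RtoC (lambda * a))) (RtoC (-1)) (RtoC 1) (RtoC 0).

Fixpoint Mn (lambda : R) (E : C) (alpha theta : R) (n : nat) : mat2 :=
  match n with
  | O => mat2_id
  | S m => mat2_mul (Tmat lambda E (v_seq alpha theta (S m))) (Mn lambda E alpha theta m)
  end.

(* The transfer matrices have determinant 1 and bounded entries, so
   f_n(theta) = ln ||M_n(theta)|| satisfies 0 <= f_n <= C n and is a subadditive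
   cocycle over the rotation theta -> theta + alpha:
   f_(n+m)(theta) <= f_n(theta) + f_m(theta + n alpha).  For such cocycles
   f_n / n converges to g = inf_l sup_theta f_l / l uniformly in theta as soon
   as the underlying sequence is linearly recurrent: every word of length n
   seen from theta also appears from any theta' after at most L n steps.
   The upper bound comes from cutting [0, n) into blocks; for the lower bound,
   a near-maximal orbit segment of length (L+1) n contains the word of theta
   early, so subadditivity forces f_n(theta) >= (g - eps) n - O(1).
   Linear recurrence of the Sturmian sequence v_(alpha, theta) is where the
   bounded partial quotients enter: they give the Diophantine bound
   |d alpha - z| >= c / N for 0 < |d| <= N, and they make the orbit of the
   rotation meet every interval of length delta within O(1 / delta) steps. *)

From Stdlib Require Import Reals Lra Lia ZArith.
From Coquelicot Require Import Coquelicot.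
Open Scope R_scope.

(** * Operator norm of 2x2 matrices *)

Lemma Cmod_sqr (z : C) : Cmod z ^ 2 = fst z ^ 2 + snd z ^ 2.
Proof. unfold Cmod. apply pow2_sqrt. nra. Qed.

Lemma vnorm_ge0 (v : C * C) : 0 <= vnorm v.
Proof. apply sqrt_pos. Qed.

Lemma vnorm_sqr (v : C * C) : vnorm v ^ 2 = Cmod (fst v) ^ 2 + Cmod (snd v) ^ 2.
Proof. unfold vnorm. apply pow2_sqrt. nra. Qed.

Lemma Cmod_fst_le_vnorm (v : C * C) : Cmod (fst v) <= vnorm v.
Proof.
  rewrite <- (sqrt_pow2 (Cmod (fst v))) by apply Cmod_ge_0.
  apply sqrt_le_1_alt. nra.
Qed.

Lemma Cmod_snd_le_vnorm (v : C * C) : Cmod (snd v) <= vnorm v.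
Proof.
  rewrite <- (sqrt_pow2 (Cmod (snd v))) by apply Cmod_ge_0.
  apply sqrt_le_1_alt. nra.
Qed.

Lemma vnorm_le_sum (v : C * C) : vnorm v <= Cmod (fst v) + Cmod (snd v).
Proof.
  pose proof (Cmod_ge_0 (fst v)); pose proof (Cmod_ge_0 (snd v)).
  rewrite <- (sqrt_pow2 (_ + _)) by lra. apply sqrt_le_1_alt. nra.
Qed.

Definition entry_norm (A : mat2) : R :=
  Cmod (m11 A) + Cmod (m12 A) + Cmod (m21 A) + Cmod (m22 A).

Lemma vnorm_apply_le_entry_norm (A : mat2) (v : C * C) :
  vnorm (mat2_apply A v) <= entry_norm A * vnorm v.
Proof.
  eapply Rle_trans; [apply vnorm_le_sum|]. unfold mat2_apply, entry_norm; simpl.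
  pose proof (Cmod_fst_le_vnorm v); pose proof (Cmod_snd_le_vnorm v).
  pose proof (Cmod_triangle (m11 A * fst v)%C (m12 A * snd v)%C).
  pose proof (Cmod_triangle (m21 A * fst v)%C (m22 A * snd v)%C).
  rewrite !Cmod_mult in *.
  pose proof (Cmod_ge_0 (m11 A)); pose proof (Cmod_ge_0 (m12 A)).
  pose proof (Cmod_ge_0 (m21 A)); pose proof (Cmod_ge_0 (m22 A)).
  pose proof (Cmod_ge_0 (fst v)); pose proof (Cmod_ge_0 (snd v)).
  nra.
Qed.

Definition e1 : C * C := (RtoC 1, RtoC 0).
Definition e2 : C * C := (RtoC 0, RtoC 1).

Lemma vnorm_e1 : vnorm e1 = 1.
Proof.
  unfold vnorm, e1; simpl. rewrite Cmod_1, Cmod_0.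
  replace (_ + _) with 1 by ring. apply sqrt_1.
Qed.

Lemma vnorm_e2 : vnorm e2 = 1.
Proof.
  unfold vnorm, e2; simpl. rewrite Cmod_1, Cmod_0.
  replace (_ + _) with 1 by ring. apply sqrt_1.
Qed.

Lemma opnorm_spec (A : mat2) :
  (forall v, vnorm v = 1 -> vnorm (mat2_apply A v) <= opnorm A) /\
  (forall b, (forall v, vnorm v = 1 -> vnorm (mat2_apply A v) <= b) -> opnorm A <= b).
Proof.
  unfold opnorm.
  set (S := fun r => exists v, vnorm v = 1 /\ r = vnorm (mat2_apply A v)).
  destruct (Lub_Rbar_correct S) as [Hub Hlub].
  destruct (Lub_Rbar S) as [l| |]; simpl.
  - split.
    + intros v Hv. exact (Hub _ (ex_intro _ v (conj Hv eq_refl))).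
    + intros b Hb. apply (Hlub (Finite b)). intros x [v [Hv ->]]. now apply Hb.
  - exfalso. apply (Hlub (Finite (entry_norm A))). intros x [v [Hv ->]]; simpl.
    rewrite <- (Rmult_1_r (entry_norm A)), <- Hv. apply vnorm_apply_le_entry_norm.
  - exfalso. exact (Hub _ (ex_intro _ e1 (conj vnorm_e1 eq_refl))).
Qed.

Lemma opnorm_ge_unit (A : mat2) (v : C * C) :
  vnorm v = 1 -> vnorm (mat2_apply A v) <= opnorm A.
Proof. apply opnorm_spec. Qed.

Lemma opnorm_le_of_unit (A : mat2) (b : R) :
  (forall v, vnorm v = 1 -> vnorm (mat2_apply A v) <= b) -> opnorm A <= b.
Proof. apply opnorm_spec. Qed.

Lemma opnorm_ge0 (A : mat2) : 0 <= opnorm A.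
Proof. eapply Rle_trans; [apply vnorm_ge0 | exact (opnorm_ge_unit A e1 vnorm_e1)]. Qed.

Lemma opnorm_le_entry_norm (A : mat2) : opnorm A <= entry_norm A.
Proof.
  apply opnorm_le_of_unit. intros v Hv.
  rewrite <- (Rmult_1_r (entry_norm A)), <- Hv. apply vnorm_apply_le_entry_norm.
Qed.

Definition vscal (s : R) (v : C * C) : C * C := (RtoC s * fst v, RtoC s * snd v)%C.

Lemma vnorm_scal (s : R) (v : C * C) : vnorm (vscal s v) = Rabs s * vnorm v.
Proof.
  unfold vnorm, vscal; cbn [fst snd]. rewrite !Cmod_mult, Cmod_R.
  replace ((Rabs s * Cmod (fst v)) ^ 2 + (Rabs s * Cmod (snd v)) ^ 2)
    with (Rabs s ^ 2 * (Cmod (fst v) ^ 2 + Cmod (snd v) ^ 2)) by ring.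
  rewrite sqrt_mult_alt, sqrt_pow2 by (apply pow2_ge_0 || apply Rabs_pos). reflexivity.
Qed.

Lemma mat2_apply_scal (A : mat2) (s : R) (v : C * C) :
  mat2_apply A (vscal s v) = vscal s (mat2_apply A v).
Proof. unfold mat2_apply, vscal; simpl. f_equal; ring. Qed.

Lemma vnorm_apply_le_opnorm (A : mat2) (v : C * C) :
  vnorm (mat2_apply A v) <= opnorm A * vnorm v.
Proof.
  destruct (Req_dec (vnorm v) 0) as [Hz|Hz].
  - assert (Hv : v = vscal 0 v).
    { pose proof (Cmod_fst_le_vnorm v); pose proof (Cmod_snd_le_vnorm v).
      pose proof (Cmod_ge_0 (fst v)); pose proof (Cmod_ge_0 (snd v)).
      destruct v as [x y]; unfold vscal; simpl in *.
      rewrite (Cmod_eq_0 x), (Cmod_eq_0 y) by lra. f_equal; ring. }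
    rewrite Hv, mat2_apply_scal, !vnorm_scal, Rabs_R0. pose proof (opnorm_ge0 A). nra.
  - pose proof (vnorm_ge0 v).
    assert (Hu : vnorm (vscal (/ vnorm v) v) = 1).
    { rewrite vnorm_scal, Rabs_pos_eq by (apply Rlt_le, Rinv_0_lt_compat; lra). field. lra. }
    pose proof (opnorm_ge_unit A _ Hu) as Hle.
    rewrite mat2_apply_scal, vnorm_scal, Rabs_pos_eq in Hle
      by (apply Rlt_le, Rinv_0_lt_compat; lra).
    apply (Rmult_le_compat_l (vnorm v)) in Hle; [|lra].
    rewrite <- Rmult_assoc, Rinv_r, Rmult_1_l in Hle by lra. lra.
Qed.

Lemma mat2_apply_mul (A B : mat2) (v : C * C) :
  mat2_apply (mat2_mul A B) v = mat2_apply A (mat2_apply B v).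
Proof. unfold mat2_apply, mat2_mul; simpl. f_equal; ring. Qed.

Lemma opnorm_mul_le (A B : mat2) : opnorm (mat2_mul A B) <= opnorm A * opnorm B.
Proof.
  apply opnorm_le_of_unit. intros v Hv. rewrite mat2_apply_mul.
  eapply Rle_trans; [apply vnorm_apply_le_opnorm|].
  apply Rmult_le_compat_l; [apply opnorm_ge0 | now apply opnorm_ge_unit].
Qed.

Lemma opnorm_id : opnorm mat2_id <= 1.
Proof.
  apply opnorm_le_of_unit. intros v Hv. rewrite <- Hv.
  unfold mat2_apply, mat2_id. destruct v as [x y]; simpl.
  right. f_equal; f_equal; ring.
Qed.

Lemma mat2_apply_e1 (A : mat2) : mat2_apply A e1 = (m11 A, m21 A).
Proof. unfold mat2_apply, e1; simpl. f_equal; ring. Qed.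

Lemma mat2_apply_e2 (A : mat2) : mat2_apply A e2 = (m12 A, m22 A).
Proof. unfold mat2_apply, e2; simpl. f_equal; ring. Qed.

Definition det2 (A : mat2) : C := (m11 A * m22 A - m12 A * m21 A)%C.

Lemma det2_mul (A B : mat2) : det2 (mat2_mul A B) = (det2 A * det2 B)%C.
Proof. unfold det2, mat2_mul; simpl. ring. Qed.

(* Hadamard's inequality, from the Lagrange identity
   |u|^2 |w|^2 = |<u, w>|^2 + |det (u, w)|^2 for the columns u, w of A. *)
Lemma Cmod_det2_le (A : mat2) :
  Cmod (det2 A) <= vnorm (mat2_apply A e1) * vnorm (mat2_apply A e2).
Proof.
  pose proof (Cmod_ge_0 (det2 A)).
  pose proof (Rmult_le_pos _ _ (vnorm_ge0 (mat2_apply A e1)) (vnorm_ge0 (mat2_apply A e2))).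
  enough (Cmod (det2 A) ^ 2 <= (vnorm (mat2_apply A e1) * vnorm (mat2_apply A e2)) ^ 2) by nra.
  rewrite Rpow_mult_distr, mat2_apply_e1, mat2_apply_e2, !vnorm_sqr, !Cmod_sqr.
  destruct A as [[p1 p2] [q1 q2] [r1 r2] [t1 t2]]; simpl.
  pose proof (pow2_ge_0 (p1*q1 + p2*q2 + r1*t1 + r2*t2)) as Hre.
  pose proof (pow2_ge_0 (p1*q2 - p2*q1 + r1*t2 - r2*t1)) as Him.
  match goal with |- ?l <= ?r =>
    replace r with (l + (p1*q1 + p2*q2 + r1*t1 + r2*t2) ^ 2
                       + (p1*q2 - p2*q1 + r1*t2 - r2*t1) ^ 2) by ring end.
  lra.
Qed.

Lemma opnorm_ge1_of_det2 (A : mat2) : det2 A = RtoC 1 -> 1 <= opnorm A.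
Proof.
  intros Hd. pose proof (Cmod_det2_le A) as H. rewrite Hd, Cmod_1 in H.
  pose proof (opnorm_ge_unit A e1 vnorm_e1); pose proof (opnorm_ge_unit A e2 vnorm_e2).
  pose proof (vnorm_ge0 (mat2_apply A e1)); pose proof (vnorm_ge0 (mat2_apply A e2)).
  nra.
Qed.

(** * Transfer matrices *)

Lemma mat2_mul_assoc (A B C : mat2) :
  mat2_mul A (mat2_mul B C) = mat2_mul (mat2_mul A B) C.
Proof. unfold mat2_mul; simpl. f_equal; ring. Qed.

Lemma v_seq_range (alpha theta : R) (n : nat) : 0 <= v_seq alpha theta n <= 1.
Proof. unfold v_seq. destruct Rle_dec; [destruct Rlt_dec|]; lra. Qed.

Lemma v_seq_shift (alpha theta : R) (n j : nat) :
  v_seq alpha theta (n + j) = v_seq alpha (theta + INR n * alpha) j.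
Proof.
  unfold v_seq. rewrite plus_INR.
  replace ((INR n + INR j) * alpha + theta) with (INR j * alpha + (theta + INR n * alpha))
    by ring.
  reflexivity.
Qed.

Lemma Mn_add (lambda : R) (E : C) (alpha theta : R) (n m : nat) :
  Mn lambda E alpha theta (n + m) =
  mat2_mul (Mn lambda E alpha (theta + INR n * alpha) m) (Mn lambda E alpha theta n).
Proof.
  induction m as [|m IH].
  - rewrite Nat.add_0_r. unfold Mn at 2. unfold mat2_mul, mat2_id.
    destruct (Mn _ _ _ _ n); simpl. f_equal; ring.
  - rewrite Nat.add_succ_r. simpl Mn.
    rewrite IH, mat2_mul_assoc, <- v_seq_shift, Nat.add_succ_r. reflexivity.
Qed.

Lemma Mn_ext (lambda : R) (E : C) (alpha theta theta' : R) (n : nat) :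
  (forall j, (1 <= j <= n)%nat -> v_seq alpha theta j = v_seq alpha theta' j) ->
  Mn lambda E alpha theta n = Mn lambda E alpha theta' n.
Proof.
  induction n as [|n IH]; intros H; simpl; [reflexivity|].
  rewrite H by lia. rewrite IH by (intros; apply H; lia). reflexivity.
Qed.

Lemma det2_Mn (lambda : R) (E : C) (alpha theta : R) (n : nat) :
  det2 (Mn lambda E alpha theta n) = RtoC 1.
Proof.
  induction n as [|n IH]; simpl Mn.
  - unfold det2, mat2_id; simpl. ring.
  - rewrite det2_mul, IH. unfold det2, Tmat; simpl. ring.
Qed.

Definition Tmat_bound (lambda : R) (E : C) : R := Cmod E + Rabs lambda + 2.

Lemma opnorm_Tmat_le (lambda : R) (E : C) (x : R) :
  0 <= x <= 1 -> opnorm (Tmat lambda E x) <= Tmat_bound lambda E.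
Proof.
  intros Hx. eapply Rle_trans; [apply opnorm_le_entry_norm|].
  unfold entry_norm, Tmat, Tmat_bound; simpl.
  rewrite !Cmod_R, Rabs_R1, Rabs_R0, (Rabs_left (-1)) by lra.
  pose proof (Cmod_triangle E (- RtoC (lambda * x))) as Htri.
  rewrite Cmod_opp, Cmod_R, Rabs_mult, (Rabs_pos_eq x) in Htri by lra.
  pose proof (Rabs_pos lambda).
  unfold Cminus. nra.
Qed.

Lemma opnorm_Mn_le (lambda : R) (E : C) (alpha theta : R) (n : nat) :
  opnorm (Mn lambda E alpha theta n) <= Tmat_bound lambda E ^ n.
Proof.
  induction n as [|n IH]; simpl Mn.
  - apply opnorm_id.
  - eapply Rle_trans; [apply opnorm_mul_le|]. simpl.
    apply Rmult_le_compat; try apply opnorm_ge0; [|exact IH].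
    apply opnorm_Tmat_le, v_seq_range.
Qed.

Definition log_norm (lambda : R) (E : C) (alpha theta : R) (n : nat) : R :=
  ln (opnorm (Mn lambda E alpha theta n)).

Lemma log_norm_bounds (lambda : R) (E : C) (alpha theta : R) (n : nat) :
  0 <= log_norm lambda E alpha theta n <= INR n * ln (Tmat_bound lambda E).
Proof.
  unfold log_norm. pose proof (opnorm_ge1_of_det2 _ (det2_Mn lambda E alpha theta n)).
  assert (1 <= Tmat_bound lambda E).
  { unfold Tmat_bound. pose proof (Cmod_ge_0 E). pose proof (Rabs_pos lambda). lra. }
  split.
  - rewrite <- ln_1. apply ln_le; lra.
  - rewrite <- ln_pow by lra. apply ln_le; [lra | apply opnorm_Mn_le].
Qed.

Lemma log_norm_subadd (lambda : R) (E : C) (alpha theta : R) (n m : nat) :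
  log_norm lambda E alpha theta (n + m) <=
  log_norm lambda E alpha theta n + log_norm lambda E alpha (theta + INR n * alpha) m.
Proof.
  unfold log_norm.
  pose proof (opnorm_ge1_of_det2 _ (det2_Mn lambda E alpha theta (n + m))) as Hnm.
  rewrite Mn_add in Hnm |- *.
  set (A := Mn lambda E alpha theta n) in *.
  set (B := Mn lambda E alpha (theta + INR n * alpha) m) in *.
  pose proof (opnorm_ge1_of_det2 A (det2_Mn _ _ _ _ _)).
  pose proof (opnorm_ge1_of_det2 B (det2_Mn _ _ _ _ _)).
  rewrite <- ln_mult by lra. apply ln_le; [lra|].
  rewrite Rmult_comm. apply opnorm_mul_le.
Qed.

(** * Uniform limits of subadditive cocycles *)

Lemma is_lim_seq_div_INR (u : nat -> R) (g : R) :
  (forall e, 0 < e -> exists D, forall n, (1 <= n)%nat ->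
     Rabs (u n - g * INR n) <= e * INR n + D) ->
  is_lim_seq (fun n => u n / INR n) g.
Proof.
  intros H. apply is_lim_seq_spec. intros [eps Heps]; simpl.
  destruct (H (eps / 2)) as [D HD]; [lra|].
  destruct (INR_archimed (eps / 2) D) as [N HN]; [lra|].
  exists (S N). intros n Hn.
  assert (Hn0 : 0 < INR n) by (apply lt_0_INR; lia).
  assert (HD' : D < eps / 2 * INR n) by (pose proof (le_INR N n ltac:(lia)); nra).
  replace (u n / INR n - g) with ((u n - g * INR n) / INR n) by (field; lra).
  unfold Rdiv. rewrite Rabs_mult, Rabs_inv, (Rabs_pos_eq (INR n)) by lra.
  apply (Rmult_lt_reg_r (INR n)); [lra|].
  rewrite Rmult_assoc, Rinv_l by lra. specialize (HD n ltac:(lia)). lra.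
Qed.

Section SubadditiveCocycle.

Variables (T : Type) (x0 : T) (shift : T -> nat -> T) (f : T -> nat -> R) (c0 : R).

Hypothesis f_bounds : forall t n, 0 <= f t n <= INR n * c0.
Hypothesis f_subadd : forall t n m, f t (n + m) <= f t n + f (shift t n) m.

Definition rate_bounded_by (c : R) : Prop :=
  exists l, (1 <= l)%nat /\ forall t, f t l <= c * INR l.

Lemma rate_bound_nonneg (c : R) : rate_bounded_by c -> 0 <= c.
Proof.
  intros [l [Hl Hc]]. pose proof (f_bounds x0 l). pose proof (Hc x0).
  assert (0 < INR l) by (apply lt_0_INR; lia). nra.
Qed.

Lemma rate_bounded_by_c0 : rate_bounded_by c0.
Proof. exists 1%nat. split; [lia|]. intros t. pose proof (f_bounds t 1). simpl in *. lra. Qed.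

(* Cut [0, n) into blocks of length l and a remainder shorter than l. *)
Lemma block_bound (c : R) :
  rate_bounded_by c -> exists D, forall t n, f t n <= c * INR n + D.
Proof.
  intros Hc. pose proof (rate_bound_nonneg c Hc) as Hc0.
  pose proof (rate_bound_nonneg c0 rate_bounded_by_c0).
  destruct Hc as [l [Hl Hc]]. exists (INR l * c0).
  assert (Hq : forall q t, f t (q * l) <= c * INR (q * l)).
  { induction q as [|q IH]; intros t.
    - simpl. pose proof (f_bounds t 0). simpl in *. lra.
    - replace (S q * l)%nat with (l + q * l)%nat by lia.
      eapply Rle_trans; [apply f_subadd|]. rewrite plus_INR.
      pose proof (Hc t). pose proof (IH (shift t l)). lra. }
  intros t n.
  rewrite (Nat.div_mod_eq n l), Nat.mul_comm.
  pose proof (Nat.mod_upper_bound n l ltac:(lia)).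
  set (q := (n / l)%nat). set (r := (n mod l)%nat).
  eapply Rle_trans; [apply f_subadd|].
  pose proof (Hq q t). pose proof (f_bounds (shift t (q * l)) r).
  assert (INR r <= INR l) by (apply le_INR; lia). pose proof (pos_INR r).
  rewrite plus_INR. nra.
Qed.

(* [g] is the infimum of the admissible rates [c]. *)
Lemma growth_rate_exists : exists g,
  (forall e, 0 < e -> rate_bounded_by (g + e)) /\
  (forall n, (1 <= n)%nat -> exists t, g * INR n - 1 < f t n).
Proof.
  set (G := fun x => rate_bounded_by (- x)).
  assert (HG0 : is_upper_bound G 0).
  { intros x Hx. pose proof (rate_bound_nonneg _ Hx). lra. }
  assert (HGne : exists x, G x).
  { exists (- c0). unfold G. rewrite Ropp_involutive. apply rate_bounded_by_c0. }
  destruct (completeness G (ex_intro _ 0 HG0) HGne) as [m [Hm Hmin]].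
  exists (- m). split.
  - intros e He. apply Classical_Prop.NNPP. intros Hno.
    enough (m <= m - e) by lra. apply Hmin. intros x Hx.
    destruct (Rle_lt_dec x (m - e)) as [h|h]; [exact h|]. exfalso. apply Hno.
    destruct Hx as [l [Hl Hx]]. exists l. split; [exact Hl|]. intros t.
    eapply Rle_trans; [apply Hx|]. apply Rmult_le_compat_r; [apply pos_INR | lra].
  - intros n Hn. assert (0 < INR n) by (apply lt_0_INR; lia).
    apply Classical_Prop.NNPP. intros Hno.
    assert (HGn : G (- (- m - / INR n))).
    { unfold G. rewrite Ropp_involutive. exists n. split; [exact Hn|]. intros t.
      destruct (Rle_lt_dec (f t n) (- m * INR n - 1)) as [h|h].
      - rewrite Rmult_minus_distr_r, Rinv_l by lra. exact h.
      - exfalso. apply Hno. exists t. exact h. }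
    pose proof (Hm _ HGn). pose proof (Rinv_0_lt_compat (INR n) ltac:(lra)). lra.
Qed.

Variable L : nat.

Hypothesis f_recurrent : forall t t' n, (1 <= n)%nat ->
  exists k, (k <= L * n)%nat /\ f (shift t' k) n = f t n.

(* A near-maximal orbit segment of length (L+1)n contains the word of t
   after at most Ln steps; subadditivity then bounds f t n from below. *)
Lemma uniform_lower_bound (g : R) :
  (forall e, 0 < e -> rate_bounded_by (g + e)) ->
  (forall n, (1 <= n)%nat -> exists t, g * INR n - 1 < f t n) ->
  forall e, 0 < e -> exists D, forall t n, (1 <= n)%nat -> (g - e) * INR n - D <= f t n.
Proof.
  intros Hup Hlow e He.
  assert (HL : 0 <= INR L) by apply pos_INR.
  set (e' := e / (INR L + 1)).
  assert (He' : 0 < e') by (apply Rdiv_lt_0_compat; lra).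
  assert (HLe' : INR L * e' <= e).
  { unfold e'. apply (Rmult_le_reg_r (INR L + 1)); [lra|].
    field_simplify; [nra | lra]. }
  destruct (block_bound _ (Hup e' He')) as [D HD].
  exists (1 + 2 * D). intros t n Hn.
  destruct (Hlow ((L + 1) * n)%nat ltac:(nia)) as [ts Hts].
  destruct (f_recurrent t ts n Hn) as [k [Hk Hkt]].
  set (r := (L * n - k)%nat).
  replace ((L + 1) * n)%nat with (k + (n + r))%nat in Hts by (unfold r; nia).
  pose proof (f_subadd ts k (n + r)) as Hsplit_k.
  pose proof (f_subadd (shift ts k) n r) as Hsplit_n. rewrite Hkt in Hsplit_n.
  pose proof (HD ts k). pose proof (HD (shift (shift ts k) n) r).
  assert (Hkr : INR k + INR r = INR L * INR n).
  { rewrite <- plus_INR, <- mult_INR. f_equal. unfold r. lia. }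
  rewrite !plus_INR in Hts. pose proof (pos_INR n). nra.
Qed.

Theorem subadditive_cocycle_uniform_limit :
  exists g : R, forall t, is_lim_seq (fun n => f t n / INR n) g.
Proof.
  destruct growth_rate_exists as [g [Hup Hlow]].
  exists g. intros t. apply is_lim_seq_div_INR. intros e He.
  destruct (block_bound _ (Hup e He)) as [D1 HD1].
  destruct (uniform_lower_bound g Hup Hlow e He) as [D2 HD2].
  exists (Rmax D1 D2). intros n Hn.
  pose proof (HD1 t n). pose proof (HD2 t n Hn).
  pose proof (Rmax_l D1 D2). pose proof (Rmax_r D1 D2).
  apply Rabs_le. split; lra.
Qed.

End SubadditiveCocycle.

(** * Continued fractions of bounded type *)

Lemma cf_finite_ext (a b : nat -> nat) (n : nat) :
  (forall i, a i = b i) -> cf_finite a n = cf_finite b n.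
Proof.
  revert a b. induction n as [|n IH]; intros a b H; simpl; [reflexivity|].
  rewrite H, (IH _ (fun k => b (S k))) by (intros; apply H). reflexivity.
Qed.

Lemma cf_finite_range (a : nat -> nat) (n : nat) :
  (forall k, (0 < a k)%nat) -> 0 <= cf_finite a n <= 1.
Proof.
  revert a. induction n as [|n IH]; intros a Ha; simpl; [lra|].
  pose proof (IH (fun k => a (S k)) (fun k => Ha (S k))).
  assert (1 <= INR (a 0%nat)) by (apply (le_INR 1), Ha).
  split.
  - left. apply Rinv_0_lt_compat. lra.
  - rewrite <- Rinv_1. apply Rinv_le_contravar; lra.
Qed.

Lemma is_lim_cf_finite_tail (a : nat -> nat) (x : R) :
  0 < x -> is_lim_seq (cf_finite a) x ->
  is_lim_seq (cf_finite (fun i => a (S i))) (/ x - INR (a 0%nat)).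
Proof.
  intros Hx Hl. apply is_lim_seq_incr_1 in Hl.
  apply is_lim_seq_inv in Hl; [|simpl; intros h; injection h; lra]. simpl in Hl.
  eapply is_lim_seq_ext;
    [|exact (is_lim_seq_minus' _ _ _ _ Hl (is_lim_seq_const (INR (a 0%nat))))].
  intros n. simpl. rewrite Rinv_inv. ring.
Qed.

Lemma irrational_inv_sub_INR (x : R) (n : nat) :
  0 < x -> irrational x -> irrational (/ x - INR n).
Proof.
  intros Hx Hirr [p [q [Hq Hpq]]]. apply Hirr.
  assert (Hq' : IZR q <> 0) by (apply not_0_IZR; exact Hq).
  assert (Hinv : / x = IZR (Z.of_nat n * q + p) / IZR q).
  { rewrite plus_IZR, mult_IZR, <- INR_IZR_INZ.
    replace (/ x) with (INR n + IZR p / IZR q) by lra. field. exact Hq'. }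
  assert (Hnum : IZR (Z.of_nat n * q + p) <> 0).
  { intros h. rewrite h in Hinv. pose proof (Rinv_0_lt_compat x Hx).
    unfold Rdiv in Hinv. lra. }
  exists q, (Z.of_nat n * q + p)%Z. split.
  - intros h. apply Hnum. rewrite h. reflexivity.
  - rewrite <- (Rinv_inv x), Hinv. field. split; assumption.
Qed.

Lemma irrational_unit_open (x : R) : irrational x -> 0 <= x <= 1 -> 0 < x < 1.
Proof.
  intros Hirr [H0 H1]. split.
  - destruct H0 as [h|h]; [exact h|]. exfalso. apply Hirr.
    exists 0%Z, 1%Z. split; [lia|]. rewrite <- h. simpl. lra.
  - destruct H1 as [h|h]; [exact h|]. exfalso. apply Hirr.
    exists 1%Z, 1%Z. split; [lia|]. rewrite h. simpl. lra.
Qed.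

Lemma cf_limit_range (a : nat -> nat) (x : R) :
  (forall k, (0 < a k)%nat) -> is_lim_seq (cf_finite a) x -> 0 <= x <= 1.
Proof.
  intros Ha Hl. pose proof (fun n => cf_finite_range a n Ha) as Hr. split.
  - exact (is_lim_seq_le (fun _ => 0) _ 0 x (fun n => proj1 (Hr n)) (is_lim_seq_const 0) Hl).
  - exact (is_lim_seq_le _ (fun _ => 1) x 1 (fun n => proj2 (Hr n)) Hl (is_lim_seq_const 1)).
Qed.

(* The Gauss map iterates: gauss_iter k = [a_k, a_(k+1), ...]. *)
Fixpoint gauss_iter (alpha : R) (a : nat -> nat) (k : nat) : R :=
  match k with
  | O => alpha
  | S k => / gauss_iter alpha a k - INR (a k)
  end.

Lemma gauss_iter_range (alpha : R) (a : nat -> nat) :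
  0 < alpha < 1 -> irrational alpha -> is_cf_expansion alpha a ->
  forall k, 0 < gauss_iter alpha a k < 1.
Proof.
  intros Ha Hirr [Hpos Hlim].
  enough (H : forall k, 0 < gauss_iter alpha a k < 1 /\ irrational (gauss_iter alpha a k) /\
            is_lim_seq (cf_finite (fun i => a (k + i)%nat)) (gauss_iter alpha a k))
    by (intros k; apply H).
  induction k as [|k [Hx [Hi Hl]]]; [easy|].
  assert (Hl' : is_lim_seq (cf_finite (fun i => a (S k + i)%nat)) (gauss_iter alpha a (S k))).
  { pose proof (is_lim_cf_finite_tail _ _ (proj1 Hx) Hl) as H.
    cbv beta in H. rewrite Nat.add_0_r in H. eapply is_lim_seq_ext; [|exact H].
    intros n. apply cf_finite_ext. intros i. f_equal. lia. }
  pose proof (irrational_inv_sub_INR _ (a k) (proj1 Hx) Hi) as Hi'.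
  repeat split; try assumption; apply irrational_unit_open; try assumption;
    apply (cf_limit_range _ _ (fun i => Hpos _) Hl').
Qed.

(* cf_den_pair a k = (q_(k-1), q_k) and cf_num_pair a k = (p_(k-1), p_k),
   where p_k / q_k = [a_0, ..., a_(k-1)]. *)
Fixpoint cf_den_pair (a : nat -> nat) (k : nat) : Z * Z :=
  match k with
  | O => (0%Z, 1%Z)
  | S k => (snd (cf_den_pair a k),
            (Z.of_nat (a k) * snd (cf_den_pair a k) + fst (cf_den_pair a k))%Z)
  end.

Fixpoint cf_num_pair (a : nat -> nat) (k : nat) : Z * Z :=
  match k with
  | O => (1%Z, 0%Z)
  | S k => (snd (cf_num_pair a k),
            (Z.of_nat (a k) * snd (cf_num_pair a k) + fst (cf_num_pair a k))%Z)
  end.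

Lemma cf_pair_det (a : nat -> nat) (k : nat) :
  let q := cf_den_pair a k in let p := cf_num_pair a k in
  (snd p * fst q - fst p * snd q = 1 \/ snd p * fst q - fst p * snd q = -1)%Z.
Proof.
  induction k as [|k IH]; simpl in *; [right; reflexivity|].
  destruct IH; [right|left]; nia.
Qed.

Lemma Z_mul_sub_mul_neq0 (P Q p0 q0 d z : Z) :
  (P * q0 - p0 * Q = 1 \/ P * q0 - p0 * Q = -1)%Z -> (1 <= Z.abs d < Q)%Z ->
  (d * P - z * Q <> 0)%Z.
Proof.
  intros He Hd h.
  assert (Hde : (d * (P * q0 - p0 * Q) = Q * (z * q0 - d * p0))%Z).
  { transitivity ((d * P) * q0 - d * p0 * Q)%Z; [ring|].
    replace (d * P)%Z with (z * Q)%Z by lia. ring. }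
  set (X := (z * q0 - d * p0)%Z) in Hde.
  assert (Habs : Z.abs d = (Q * Z.abs X)%Z).
  { rewrite <- (Z.abs_eq Q), <- Z.abs_mul by lia.
    destruct He as [He|He]; rewrite He in Hde; lia. }
  destruct (Z.eq_dec X 0) as [h0|h0]; nia.
Qed.

Lemma dist_lower_bound_of_coprime (alpha : R) (P Q p0 q0 d z : Z) :
  (P * q0 - p0 * Q = 1 \/ P * q0 - p0 * Q = -1)%Z -> (1 <= Z.abs d < Q)%Z ->
  1 - Rabs (IZR d) * Rabs (IZR Q * alpha - IZR P) <= IZR Q * Rabs (IZR d * alpha - IZR z).
Proof.
  intros Hdet Hd.
  assert (Hint : 1 <= Rabs (IZR (d * P - z * Q))).
  { rewrite Rabs_Zabs. apply IZR_le. pose proof (Z_mul_sub_mul_neq0 P Q p0 q0 d z Hdet Hd). lia. }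
  assert (HQ : 0 <= IZR Q) by (apply IZR_le; lia).
  pose proof (Rabs_triang_inv (IZR (d * P - z * Q)) (- (IZR d * (IZR Q * alpha - IZR P))))
    as Htri.
  replace (IZR (d * P - z * Q) - - (IZR d * (IZR Q * alpha - IZR P)))
    with (IZR Q * (IZR d * alpha - IZR z)) in Htri by (rewrite minus_IZR, !mult_IZR; ring).
  rewrite Rabs_Ropp, !Rabs_mult, (Rabs_pos_eq (IZR Q)) in Htri by exact HQ. lra.
Qed.

(* P is invertible modulo Q, with inverse +-q0. *)
Lemma Z_mul_eq_mod (P Q p0 q0 r : Z) :
  (P * q0 - p0 * Q = 1 \/ P * q0 - p0 * Q = -1)%Z -> (0 < Q)%Z ->
  exists j w, (0 <= j < Q)%Z /\ (j * P = r + Q * w)%Z.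
Proof.
  intros He HQ. set (e := (P * q0 - p0 * Q)%Z) in He.
  assert (Hee : (e * e = 1)%Z) by (destruct He as [h|h]; rewrite h; reflexivity).
  set (s := ((e * r * q0) / Q)%Z).
  exists ((e * r * q0) mod Q)%Z, (e * r * p0 - s * P)%Z. split.
  - apply Z.mod_pos_bound. exact HQ.
  - rewrite Z.mod_eq by lia. fold s.
    transitivity (r * (e * e) + Q * (e * r * p0 - s * P))%Z; [unfold e; ring|].
    rewrite Hee. ring.
Qed.

Section BoundedType.

Variables (alpha : R) (a : nat -> nat) (K : nat).

Hypothesis a_pos : forall k, (0 < a k)%nat.

Lemma cf_den_props (k : nat) :
  (0 <= fst (cf_den_pair a k) <= snd (cf_den_pair a k) /\ 1 <= snd (cf_den_pair a k) /\
   Z.of_nat k <= snd (cf_den_pair a k) /\ (k = 0%nat \/ 1 <= fst (cf_den_pair a k)))%Z.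
Proof.
  induction k as [|k IH]; simpl in *; [lia|].
  pose proof (a_pos k). destruct IH as [h1 [h2 [h3 [->|h4]]]]; simpl; nia.
Qed.

Lemma cf_den_add_le (k : nat) :
  (snd (cf_den_pair a k) + fst (cf_den_pair a k) <= snd (cf_den_pair a (S k)))%Z.
Proof. simpl. pose proof (a_pos k). pose proof (cf_den_props k). simpl in *. nia. Qed.

Lemma cf_den_crossing (X : R) : 1 < X ->
  exists i, IZR (snd (cf_den_pair a i)) < X <= IZR (snd (cf_den_pair a (S i))).
Proof.
  intros HX. destruct (INR_archimed 1 X) as [m Hm]; [lra|].
  assert (Hq : X <= IZR (snd (cf_den_pair a m))).
  { destruct (cf_den_props m) as [_ [_ [Hk _]]].
    apply IZR_le in Hk. rewrite <- INR_IZR_INZ in Hk. lra. }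
  clear Hm. induction m as [|m IH]; [simpl in Hq; lra|].
  destruct (Rle_lt_dec X (IZR (snd (cf_den_pair a m)))) as [h|h]; [now apply IH|].
  exists m. split; [exact h | exact Hq].
Qed.

Hypothesis a_le : forall k, (a k <= K)%nat.

Lemma cf_den_le_mul (k : nat) :
  (snd (cf_den_pair a (S k)) <= (Z.of_nat K + 1) * snd (cf_den_pair a k))%Z.
Proof. simpl. pose proof (a_le k). pose proof (cf_den_props k). simpl in *. nia. Qed.

Hypothesis gauss_range : forall k, 0 < gauss_iter alpha a k < 1.

Lemma cf_gauss_identity (k : nat) :
  alpha * (IZR (snd (cf_den_pair a k)) + gauss_iter alpha a k * IZR (fst (cf_den_pair a k))) =
  IZR (snd (cf_num_pair a k)) + gauss_iter alpha a k * IZR (fst (cf_num_pair a k)).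
Proof.
  induction k as [|k IH]; simpl; [ring|].
  rewrite !plus_IZR, !mult_IZR, <- INR_IZR_INZ.
  pose proof (gauss_range k).
  set (x := gauss_iter alpha a k) in *.
  replace (alpha * (INR (a k) * IZR (snd (cf_den_pair a k)) + IZR (fst (cf_den_pair a k))
             + (/ x - INR (a k)) * IZR (snd (cf_den_pair a k))))
    with (alpha * (IZR (snd (cf_den_pair a k)) + x * IZR (fst (cf_den_pair a k))) / x)
    by (field; lra).
  rewrite IH. field. lra.
Qed.

Lemma cf_approx (k : nat) :
  Rabs (IZR (snd (cf_den_pair a k)) * alpha - IZR (snd (cf_num_pair a k)))
  * IZR (snd (cf_den_pair a (S k))) <= 1.
Proof.
  pose proof (cf_gauss_identity (S k)) as Hid. pose proof (cf_pair_det a (S k)) as Hdet.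
  pose proof (gauss_range (S k)) as Hx. pose proof (cf_den_props k) as Hq.
  pose proof (cf_den_props (S k)) as HQ'.
  simpl fst in Hid, Hdet, HQ'. cbv zeta in Hdet.
  set (x := gauss_iter alpha a (S k)) in *.
  set (Q' := snd (cf_den_pair a (S k))) in *. set (P' := snd (cf_num_pair a (S k))) in *.
  set (q := snd (cf_den_pair a k)) in *. set (p := snd (cf_num_pair a k)) in *.
  assert (Hq0 : 0 <= IZR q) by (apply IZR_le; lia).
  assert (HQ0 : 0 <= IZR Q') by (apply IZR_le; lia).
  assert (HE : (IZR q * alpha - IZR p) * (IZR Q' + x * IZR q) = IZR (q * P' - p * Q')).
  { rewrite minus_IZR, !mult_IZR.
    transitivity (IZR q * (alpha * (IZR Q' + x * IZR q)) - IZR p * (IZR Q' + x * IZR q));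
      [ring|]. rewrite Hid. ring. }
  assert (HA : Rabs (IZR q * alpha - IZR p) * (IZR Q' + x * IZR q) = 1).
  { rewrite <- (Rabs_pos_eq (IZR Q' + x * IZR q)) by nra.
    rewrite <- Rabs_mult, HE, Rabs_Zabs.
    destruct Hdet as [h|h]; [replace (q * P' - p * Q')%Z with 1%Z by lia
                            |replace (q * P' - p * Q')%Z with (-1)%Z by lia]; reflexivity. }
  pose proof (Rabs_pos (IZR q * alpha - IZR p)).
  assert (0 <= Rabs (IZR q * alpha - IZR p) * (x * IZR q)) by (apply Rmult_le_pos; nra).
  nra.
Qed.

(* Take the convergent denominators q < N + 1 <= Q: then Q <= (K+1) N, and
   |Q alpha - P| <= 1/Q' is too small to cancel the nonzero integer dP - zQ. *)
Lemma diophantine_lower_bound (N : nat) (d z : Z) :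
  (1 <= N)%nat -> (1 <= Z.abs d <= Z.of_nat N)%Z ->
  1 <= Rabs (IZR d * alpha - IZR z) * ((INR K + 1) * (INR K + 2) * INR N).
Proof.
  intros HN Hd.
  destruct (cf_den_crossing (INR N + 1)) as [i [Hi Hk1]]; [pose proof (lt_0_INR N HN); lra|].
  pose proof (cf_pair_det a (S i)) as Hdet. pose proof (cf_approx (S i)) as HD.
  pose proof (cf_den_add_le (S i)) as Hgr. pose proof (cf_den_le_mul i) as HK.
  pose proof (cf_den_props i) as Hq.
  simpl fst in Hdet, Hgr. cbv zeta in Hdet.
  set (Q := snd (cf_den_pair a (S i))) in *. set (q := snd (cf_den_pair a i)) in *.
  set (P := snd (cf_num_pair a (S i))) in *.
  set (Q' := snd (cf_den_pair a (S (S i)))) in *.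
  assert (HQN : (Z.of_nat N + 1 <= Q)%Z).
  { apply le_IZR. rewrite plus_IZR, <- INR_IZR_INZ. exact Hk1. }
  assert (HqN : IZR q <= INR N).
  { rewrite INR_IZR_INZ in Hi |- *. rewrite <- plus_IZR in Hi.
    apply lt_IZR in Hi. apply IZR_le. lia. }
  pose proof (dist_lower_bound_of_coprime alpha P Q _ _ d z Hdet ltac:(lia)) as HQA.
  set (D := IZR Q * alpha - IZR P) in *.
  assert (HdN : Rabs (IZR d) <= INR N) by (rewrite Rabs_Zabs, INR_IZR_INZ; apply IZR_le; lia).
  assert (HQ' : IZR Q + IZR q <= IZR Q') by (rewrite <- plus_IZR; apply IZR_le; lia).
  assert (HKQ : IZR Q <= (INR K + 1) * IZR q).
  { rewrite INR_IZR_INZ, <- (plus_IZR _ 1), <- mult_IZR. apply IZR_le. lia. }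
  pose proof (pos_INR K). pose proof (pos_INR N). pose proof (Rabs_pos D).
  assert (Rabs (IZR d) * Rabs D <= INR N * Rabs D) by (apply Rmult_le_compat_r; lra).
  assert (HND : INR N * Rabs D * (INR K + 2) <= INR K + 1).
  { assert (INR N * (INR K + 2) <= (INR K + 1) * IZR Q') by nra. nra. }
  set (A := Rabs (IZR d * alpha - IZR z)) in *. pose proof (Rabs_pos (IZR d * alpha - IZR z)).
  assert (HQA' : 1 <= IZR Q * A * (INR K + 2)) by nra.
  assert (IZR Q <= (INR K + 1) * INR N) by nra.
  nra.
Qed.

(* Since Q alpha is within 1/Q' of the integer P, the first Q points of the
   orbit shadow the grid (1/Q) Z. *)
Lemma cf_orbit_near_grid (i : nat) (r : Z) :
  let Q := snd (cf_den_pair a (S i)) in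
  exists j w : Z, (0 <= j < Q)%Z /\ Rabs (IZR Q * (IZR j * alpha - IZR w) - IZR r) <= 1.
Proof.
  intros Q. pose proof (cf_pair_det a (S i)) as Hdet. cbv zeta in Hdet. simpl fst in Hdet.
  pose proof (cf_approx (S i)) as HD. pose proof (cf_den_add_le (S i)) as Hgr.
  pose proof (cf_den_props (S i)) as [_ [HQ1 _]]. pose proof (cf_den_props i) as [_ [Hq1 _]].
  fold Q in HD, Hgr, HQ1.
  simpl fst in Hgr.
  set (P := snd (cf_num_pair a (S i))) in *.
  set (D := IZR Q * alpha - IZR P) in *.
  set (Q' := snd (cf_den_pair a (S (S i)))) in *.
  destruct (Z_mul_eq_mod P Q _ _ r Hdet ltac:(lia)) as [j [w [Hj HjP]]].
  exists j, w. split; [exact Hj|].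
  replace (IZR Q * (IZR j * alpha - IZR w) - IZR r) with (IZR j * D).
  2:{ unfold D. apply (f_equal IZR) in HjP. rewrite mult_IZR, plus_IZR, mult_IZR in HjP.
      rewrite Rmult_minus_distr_l, HjP. ring. }
  assert (0 <= IZR j <= IZR Q') by (split; apply IZR_le; lia).
  rewrite Rabs_mult, Rabs_pos_eq by lra. pose proof (Rabs_pos D). nra.
Qed.

Lemma rotation_hits_interval (delta theta u : R) : 0 < delta ->
  exists j : nat, INR j * delta <= 4 * (INR K + 1) /\
    exists z : Z, u <= theta + INR j * alpha + IZR z < u + delta.
Proof.
  intros Hdl. pose proof (pos_INR K).
  destruct (Rle_lt_dec 4 delta) as [Hbig|Hsmall].
  - exists 0%nat. split; [simpl; lra|].
    exists (Int_part (u - theta) + 1)%Z. destruct (base_Int_part (u - theta)).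
    rewrite plus_IZR. simpl. lra.
  - destruct (cf_den_crossing (4 / delta)) as [i [Hi Hk]].
    { unfold Rdiv. apply (Rmult_lt_reg_r delta); [lra|]. rewrite Rmult_assoc, Rinv_l; lra. }
    pose proof (cf_den_le_mul i) as HK. pose proof (cf_den_props (S i)) as [_ [HQ1 _]].
    set (Q := snd (cf_den_pair a (S i))) in *. set (q := snd (cf_den_pair a i)) in *.
    set (r := Int_part (IZR Q * (u + delta / 2 - theta))).
    destruct (cf_orbit_near_grid i r) as [j [w [Hj Hjw]]]. fold Q in Hj, Hjw.
    exists (Z.to_nat j). rewrite INR_IZR_INZ, Z2Nat.id by lia.
    assert (HQ : 0 < IZR Q) by (apply IZR_lt; lia).
    assert (HQd : 4 <= IZR Q * delta).
    { apply (Rmult_le_compat_r delta) in Hk; [|lra].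
      unfold Rdiv in Hk. rewrite Rmult_assoc, Rinv_l in Hk by lra. lra. }
    assert (Hqd : IZR q * delta < 4).
    { apply (Rmult_lt_compat_r delta) in Hi; [|lra].
      unfold Rdiv in Hi. rewrite Rmult_assoc, Rinv_l in Hi by lra. lra. }
    assert (HKQ : IZR Q <= (INR K + 1) * IZR q).
    { rewrite INR_IZR_INZ, <- (plus_IZR _ 1), <- mult_IZR. apply IZR_le. lia. }
    assert (0 <= IZR j <= IZR Q) by (split; apply IZR_le; lia).
    split; [nra|].
    exists (- w)%Z. rewrite opp_IZR.
    destruct (base_Int_part (IZR Q * (u + delta / 2 - theta))) as [Hr1 Hr2].
    fold r in Hr1, Hr2.
    apply Rabs_le_between in Hjw.
    split; apply (Rmult_le_reg_l (IZR Q)) || apply (Rmult_lt_reg_l (IZR Q)); nra.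
Qed.

End BoundedType.

(** * Linear recurrence of Sturmian sequences *)

Lemma fracR_range (x : R) : 0 <= fracR x < 1.
Proof. unfold fracR. destruct (base_Int_part x). lra. Qed.

Lemma fracR_IZR_add (m : Z) (y : R) : 0 <= y < 1 -> fracR (IZR m + y) = y.
Proof.
  intros Hy. unfold fracR.
  replace (Int_part (IZR m + y)) with m; [ring|].
  unfold Int_part. rewrite <- (tech_up (IZR m + y) (m + 1)); rewrite ?plus_IZR; simpl; lra + lia.
Qed.

Lemma fracR_add_IZR (x : R) (z : Z) : fracR (x + IZR z) = fracR x.
Proof.
  replace (x + IZR z) with (IZR (Int_part x + z) + fracR x)
    by (unfold fracR; rewrite plus_IZR; ring).
  apply fracR_IZR_add, fracR_range.
Qed.

Lemma fracR_add_small (x t : R) : - fracR x <= t < 1 - fracR x -> fracR (x + t) = fracR x + t.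
Proof.
  intros Ht. replace (x + t) with (IZR (Int_part x) + (fracR x + t)) by (unfold fracR; ring).
  apply fracR_IZR_add. lra.
Qed.

Lemma v_seq_add_IZR (alpha theta : R) (z : Z) (j : nat) :
  v_seq alpha (theta + IZR z) j = v_seq alpha theta j.
Proof.
  unfold v_seq. rewrite <- Rplus_assoc, fracR_add_IZR. reflexivity.
Qed.

(* v(j) = 1 iff an integer lies in (j alpha + theta, (j+1) alpha + theta], so
   moving theta by t leaves v(j) unchanged as long as neither endpoint crosses
   an integer. *)
Lemma v_seq_translate_eq (alpha theta t : R) (n : nat) : 0 < alpha < 1 ->
  (forall j, (1 <= j <= n + 1)%nat ->
     - fracR (INR j * alpha + theta) <= t < 1 - fracR (INR j * alpha + theta)) ->
  forall j, (1 <= j <= n)%nat -> v_seq alpha (theta + t) j = v_seq alpha theta j.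
Proof.
  intros Ha H j Hj.
  set (x := INR j * alpha + theta). set (y := fracR x).
  pose proof (fracR_range x) as Hy. fold y in Hy.
  pose proof (H j ltac:(lia)) as Ht. fold x y in Ht.
  pose proof (H (S j) ltac:(lia)) as Ht'.
  replace (INR (S j) * alpha + theta) with (x + alpha) in Ht' by (rewrite S_INR; unfold x; ring).
  unfold v_seq. replace (INR j * alpha + (theta + t)) with (x + t) by (unfold x; ring).
  rewrite fracR_add_small by exact Ht. fold x y.
  destruct (Rlt_le_dec (y + alpha) 1) as [Hlt|Hge].
  - rewrite (fracR_add_small x alpha) in Ht' by (fold y; lra). fold y in Ht'.
    destruct (Rle_dec (1 - alpha) y); [lra|].
    destruct (Rle_dec (1 - alpha) (y + t)); [lra | reflexivity].
  - replace (x + alpha) with ((x + (alpha - 1)) + IZR 1) in Ht' by (simpl; ring).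
    rewrite fracR_add_IZR, (fracR_add_small x) in Ht' by (fold y; lra). fold y in Ht'.
    destruct (Rle_dec (1 - alpha) y); [|lra].
    destruct (Rle_dec (1 - alpha) (y + t)); [|lra].
    destruct (Rlt_dec (y + t) 1); destruct (Rlt_dec y 1); lra.
Qed.

Lemma finite_extrema (y : nat -> R) (m : nat) :
  exists jmin jmax, (1 <= jmin <= m + 1)%nat /\ (1 <= jmax <= m + 1)%nat /\
    forall j, (1 <= j <= m + 1)%nat -> y jmin <= y j <= y jmax.
Proof.
  induction m as [|m [j1 [j2 [H1 [H2 H3]]]]].
  - exists 1%nat, 1%nat. split; [lia | split; [lia|]].
    intros j Hj. replace j with 1%nat by lia. lra.
  - set (jn := (m + 2)%nat).
    destruct (Rle_lt_dec (y j1) (y jn)); destruct (Rle_lt_dec (y jn) (y j2)).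
    + exists j1, j2. split; [lia | split; [lia|]]. intros j Hj.
      destruct (Nat.eq_dec j jn) as [->|]; [lra | apply H3; lia].
    + exists j1, jn. split; [lia | split; [lia|]]. intros j Hj.
      destruct (Nat.eq_dec j jn) as [->|]; [lra|]. pose proof (H3 j ltac:(lia)). lra.
    + exists jn, j2. split; [lia | split; [lia|]]. intros j Hj.
      destruct (Nat.eq_dec j jn) as [->|]; [lra|]. pose proof (H3 j ltac:(lia)). lra.
    + exfalso. pose proof (H3 j1 ltac:(lia)). lra.
Qed.

Section SturmianRecurrence.

Variables (alpha : R) (a : nat -> nat) (K : nat).

Hypothesis alpha_range : 0 < alpha < 1.
Hypothesis a_pos : forall k, (0 < a k)%nat.
Hypothesis a_le : forall k, (a k <= K)%nat.
Hypothesis gauss_range : forall k, 0 < gauss_iter alpha a k < 1.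

Lemma fracR_orbit_gap (theta : R) (n j1 j2 : nat) :
  (1 <= n)%nat -> (1 <= j1 <= n + 1)%nat -> (1 <= j2 <= n + 1)%nat ->
  1 <= (fracR (INR j1 * alpha + theta) + (1 - fracR (INR j2 * alpha + theta)))
       * ((INR K + 1) * (INR K + 2) * INR n).
Proof.
  intros Hn Hj1 Hj2.
  pose proof (fracR_range (INR j1 * alpha + theta)).
  pose proof (fracR_range (INR j2 * alpha + theta)).
  destruct (Nat.eq_dec j1 j2) as [<-|Hne].
  - pose proof (pos_INR K). pose proof (le_INR 1 n Hn). simpl in *.
    rewrite Rplus_minus. nra.
  - set (d := (Z.of_nat j1 - Z.of_nat j2)%Z).
    set (z := (Int_part (INR j1 * alpha + theta) - Int_part (INR j2 * alpha + theta) - 1)%Z).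
    replace (fracR (INR j1 * alpha + theta) + (1 - fracR (INR j2 * alpha + theta)))
      with (Rabs (IZR d * alpha - IZR z)).
    + apply (diophantine_lower_bound _ _ _ a_pos a_le gauss_range); [exact Hn | unfold d; lia].
    + rewrite Rabs_pos_eq.
      * unfold d, z, fracR. rewrite !minus_IZR, <- !INR_IZR_INZ. simpl. ring.
      * unfold d, z, fracR in *. rewrite !minus_IZR, <- !INR_IZR_INZ in *. simpl. lra.
Qed.

(* Moving theta by t keeps the word v(1..n) as long as t stays between
   -min_j frac(j alpha + theta) and 1 - max_j frac(j alpha + theta), j <= n+1;
   this window has length >= 1/(C n) by the gap lemma, and the rotation
   orbit of theta' enters it within O(n) steps. *)
Lemma v_seq_linearly_recurrent (theta theta' : R) (n : nat) : (1 <= n)%nat ->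
  exists k, (k <= 4 * (K + 1) * (K + 1) * (K + 2) * n)%nat /\
    forall j, (1 <= j <= n)%nat -> v_seq alpha (theta' + INR k * alpha) j = v_seq alpha theta j.
Proof.
  intros Hn.
  set (y := fun j => fracR (INR j * alpha + theta)).
  destruct (finite_extrema y n) as [j1 [j2 [Hj1 [Hj2 Hext]]]].
  pose proof (fracR_orbit_gap theta n j1 j2 Hn Hj1 Hj2) as Hgap. fold (y j1) (y j2) in Hgap.
  set (Cn := (INR K + 1) * (INR K + 2) * INR n) in Hgap.
  assert (HCn : 0 < Cn).
  { unfold Cn. pose proof (pos_INR K). pose proof (le_INR 1 n Hn). simpl in *. nra. }
  destruct (rotation_hits_interval _ _ _ a_pos a_le gauss_range (/ Cn) theta' (theta - y j1))
    as [k [Hk [z Hz]]]; [apply Rinv_0_lt_compat; exact HCn|].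
  exists k. split.
  - apply INR_le. rewrite !mult_INR, !plus_INR. simpl.
    apply (Rmult_le_compat_r Cn) in Hk; [|lra].
    rewrite Rmult_assoc, Rinv_l, Rmult_1_r in Hk by lra. unfold Cn in Hk. nra.
  - intros j Hj.
    rewrite <- (v_seq_add_IZR alpha (theta' + INR k * alpha) z j).
    replace (theta' + INR k * alpha + IZR z)
      with (theta + (theta' + INR k * alpha + IZR z - theta)) by ring.
    apply (v_seq_translate_eq alpha theta _ n alpha_range); [|exact Hj].
    intros j' Hj'. pose proof (Hext j' Hj'). unfold y in *.
    assert (/ Cn <= y j1 + (1 - y j2)).
    { apply (Rmult_le_reg_r Cn); [lra|]. rewrite Rinv_l by lra. exact Hgap. }
    unfold y in *. lra.
Qed.

End SturmianRecurrence.

Theorem theorem2 (alpha : R) (a : nat -> nat)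
  (Halpha : 0 < alpha < 1) (Hirr : irrational alpha)
  (Hcf : is_cf_expansion alpha a)
  (Hbdd : exists K : nat, forall k, (a k <= K)%nat) :
  forall (lambda : R) (E : C), lambda <> 0 ->
  exists gamma : R, forall theta : R, 0 <= theta < 1 ->
    is_lim_seq (fun n => ln (opnorm (Mn lambda E alpha theta n)) / INR n) gamma.
Proof.
  intros lambda E _.
  destruct Hbdd as [K HK].
  pose proof (proj1 Hcf) as Hpos.
  pose proof (gauss_iter_range alpha a Halpha Hirr Hcf) as Hgauss.
  destruct (subadditive_cocycle_uniform_limit R 0 (fun t n => t + INR n * alpha)
              (log_norm lambda E alpha) (ln (Tmat_bound lambda E))
              (log_norm_bounds lambda E alpha) (log_norm_subadd lambda E alpha)
              (4 * (K + 1) * (K + 1) * (K + 2)))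
    as [g Hg].
  - intros theta theta' n Hn.
    destruct (v_seq_linearly_recurrent alpha a K Halpha Hpos HK Hgauss theta theta' n Hn)
      as [k [Hk Hword]].
    exists k. split; [exact Hk|]. unfold log_norm. f_equal. f_equal. now apply Mn_ext.
  - exists g. intros theta _. apply Hg.
Qed.
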